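(* In a realisation of a local affine Gaudin model (setting below), let $\mathcal P(z)=\sum_{\alpha\in\Sigma}\sum_{p=0}^{m_\alpha-1}\frac{\mathcal D^\alpha_{[p]}}{(z-z_\alpha)^{p+1}}$ and $\mathcal H(z)=\frac12\int_{\mathbb D}dx\,\kappa\big(\Gamma(z,x),\Gamma(z,x)\big)-\varphi(z)\mathcal P(z)$. Then, as a rational function of $z$, $\mathcal H(z)$ has at each $z_\alpha$ a pole of order at most $m_\alpha$.
   Context: $\mathfrak g$: finite-dimensional simple complex Lie algebra, $\kappa$: minus its Killing form, $C_{12}=I_a\otimes I^a$ for dual bases w.r.t. $\kappa$; $\mathfrak g_0$: real form, fixed points of an antilinear involution $\tau$. $\mathbb D$ is $\mathbb R$ or the circle; $\delta'_{xy}=\partial_x\delta(x-y)$. Data: a finite set of sites $\Sigma=\Sigma_r\sqcup\Sigma_c\sqcup\bar\Sigma_c$ (real sites, complex sites, their conjugates $\bar\alpha$), multiplicities $m_\alpha\ge1$ ($m_{\bar\alpha}=m_\alpha$), levels $\ell^\alpha_{[p]}$, $0\le p\le m_\alpha-1$ (real for real sites, $\ell^{\bar\alpha}_{[p]}=\overline{\ell^\alpha_{[p]}}$), with $\ell^\alpha_{[m_\alpha-1]}\neq0$; pairwise distinct positions $z_\alpha$ (real for real sites, $z_{\bar\alpha}=\overline{z_\alpha}$); a real $\ell^\infty\neq0$. A realisation is a Poisson algebra $\mathcal A$ of local observables of a field theory on $\mathbb D$ containing $\mathfrak g$-valued fields $\mathcal J^\alpha_{[p]}(x)$ with $\{\mathcal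 J^\alpha_{[p]}{}_1(x),\mathcal J^\beta_{[q]}{}_2(y)\}=\delta_{\alpha\beta}([C_{12},\mathcal J^\alpha_{[p+q]}{}_1(x)]\delta_{xy}-\ell^\alpha_{[p+q]}C_{12}\delta'_{xy})$ if $p+q<m_\alpha$ and $0$ otherwise, with reality conditions $\tau(\mathcal J^\alpha_{[p]})=\mathcal J^\alpha_{[p]}$ (real $\alpha$), $\tau(\mathcal J^\alpha_{[p]})=\mathcal J^{\bar\alpha}_{[p]}$ (complex $\alpha$). Twist function $\varphi(z)=\sum_{\alpha\in\Sigma}\sum_{p=0}^{m_\alpha-1}\frac{\ell^\alpha_{[p]}}{(z-z_\alpha)^{p+1}}-\ell^\infty$; Gaudin Lax matrix $\Gamma(z,x)=\sum_\alpha\sum_p\frac{\mathcal J^\alpha_{[p]}(x)}{(z-z_\alpha)^{p+1}}$. For each $\alpha$, $\eta^\alpha_{[p]}$ ($0\le p\le 2m_\alpha-2$) denotes the unique solution of $\sum_{p=0}^{m_\alpha-1-r}\eta^\alpha_{[p+q]}\ell^\alpha_{[p+r]}=\delta_{q,r}$ for all $q,r\in\{0,\dots,m_\alpha-1\}$, and $\mathcal D^\alpha_{[p]}=\frac12\sum_{q,r=0,\,q+r\ge p}^{m_\alpha-1}\eta^\alpha_{[q+r-p]}\int_{\mathbb D}dx\,\kappa(\mathcal J^\alpha_{[q]}(x),\mathcal J^\alpha_{[r]}(x))$ (generalised Segal-Sugawara integrals). *)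

From HB Require Import structures.
From mathcomp Require Import all_boot all_order all_algebra.
Set Implicit Arguments. Unset Strict Implicit. Unset Printing Implicit Defensive.
Import Order.TTheory GRing.Theory Num.Theory.
Local Open Scope ring_scope.

(* Generic conventions:
   C : numClosedFieldType  -- the complex numbers (with conjugation x^* ).
   S : finType              -- the finite set of sites Sigma.
   F : lmodType C           -- the space of g-valued fields x |-> X(x) of the realisation.
   A : lmodType C           -- the algebra of local observables (as a C-vector space).
   B : F -> F -> A          -- B X Y = \int_D dx kappa(X(x), Y(x)).                    *)

Section Gaudin.
Variables (C : numClosedFieldType) (S : finType) (F A : lmodType C).
Variables (m : S -> nat) (lev : S -> nat -> C) (zp : S -> C) (linf : C).
Variables (J : S -> nat -> F) (B : F -> F -> A) (eta : S -> nat -> C).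

Definition twist (z : C) : C :=
  \sum_(a : S) \sum_(p < m a) lev a p / (z - zp a) ^+ p.+1 - linf.

Definition gaudinLax (z : C) : F :=
  \sum_(a : S) \sum_(p < m a) ((z - zp a) ^+ p.+1)^-1 *: J a p.

Definition segalSugawara (a : S) (p : nat) : A :=
  2^-1 *: \sum_(q < m a) \sum_(r < m a | (p <= q + r)%N)
            eta a (q + r - p)%N *: B (J a q) (J a r).

Definition calP (z : C) : A :=
  \sum_(a : S) \sum_(p < m a) ((z - zp a) ^+ p.+1)^-1 *: segalSugawara a p.

Definition calH (z : C) : A :=
  2^-1 *: B (gaudinLax z) (gaudinLax z) - twist z *: calP z.

End Gaudin.

(* An A-valued rational function H (given by its values off a finite set) has at z0
   a pole of order at most k: (z - z0)^k H(z) agrees, off a finite set, with an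
   A-valued rational function regular at z0, i.e. a finite sum sum_j (P_j/Q_j)(z) a_j
   with Q_j(z0) <> 0. *)
Definition pole_order_le (C : numClosedFieldType) (A : lmodType C)
  (H : C -> A) (z0 : C) (k : nat) : Prop :=
  exists (E : seq C) (n : nat) (P Q : 'I_n -> {poly C}) (v : 'I_n -> A),
    (forall j, (Q j).[z0] != 0) /\
    forall z, z \notin E ->
      (z - z0) ^+ k *: H z = \sum_(j < n) ((P j).[z] / (Q j).[z]) *: v j.

(* Write w = z - z_a and u = 1/w.  Expand H(z) over pairs of sites (b, d).  When
   (b, d) <> (a, a), each term carries at most one factor with a pole at z_a, of order
   at most m_a, so w^m_a times it is regular at z_a; the same holds for the term
   linf P(z).  In the (a, a) block the coefficient of kappa(J_q, J_r) is
   u^2 (u^T - phi(u) E_T(u)) with T = q + r, phi(u) = sum_s lev_s u^s and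
   E_T(u) = sum_(p <= T) eta_(T-p) u^p.  The relations defining eta imply that
   the coefficients of u^n, n >= m_a - 1, of u^T - phi(u) E_T(u) vanish, so the
   coefficient has degree at most m_a in u and w^m_a times the block is regular. *)

From mathcomp Require Import all_boot all_algebra.
From mathcomp Require Import zify ring.
Set Implicit Arguments. Unset Strict Implicit. Unset Printing Implicit Defensive.
Import GRing.Theory.
Local Open Scope ring_scope.

Section RegularAt.
Variables (C : numClosedFieldType) (z0 : C).

(* Off the finite exceptional set [E] the denominator is required to be nonzero,
   so that regular rational functions can be added. *)
Definition ratfun_regular (c : C -> C) : Prop :=
  exists (E : seq C) (p q : {poly C}), q.[z0] != 0 /\
    forall z, z \notin E -> q.[z] != 0 /\ c z = p.[z] / q.[z].

Lemma ratfun_regular_ext (E : seq C) (c d : C -> C) :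
  (forall z, z \notin E -> c z = d z) -> ratfun_regular d -> ratfun_regular c.
Proof.
move=> cd [E' [p [q [qz0 dpq]]]]; exists (E ++ E'), p, q; split=> // z.
by rewrite mem_cat negb_or => /andP[/cd-> /dpq].
Qed.

Lemma eq_ratfun_regular (c d : C -> C) :
  c =1 d -> ratfun_regular d -> ratfun_regular c.
Proof. by move=> cd; apply: (@ratfun_regular_ext [::]) => z _. Qed.

Lemma ratfun_regular_poly (p : {poly C}) : ratfun_regular (fun z => p.[z]).
Proof. by exists [::], p, 1; split=> [|z _]; rewrite hornerC ?oner_eq0 ?divr1. Qed.

Lemma ratfun_regular_cst (x : C) : ratfun_regular (fun=> x).
Proof. by apply: eq_ratfun_regular (ratfun_regular_poly x%:P) => z; rewrite hornerC. Qed.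

Lemma ratfun_regularD (c d : C -> C) :
  ratfun_regular c -> ratfun_regular d -> ratfun_regular (fun z => c z + d z).
Proof.
move=> [E1 [p1 [q1 [q1z0 cpq]]]] [E2 [p2 [q2 [q2z0 dpq]]]].
exists (E1 ++ E2), (p1 * q2 + p2 * q1), (q1 * q2).
split=> [|z]; first by rewrite hornerM mulf_neq0.
rewrite mem_cat negb_or => /andP[/cpq[q1z ->] /dpq[q2z ->]].
by rewrite !hornerE mulf_neq0 //; split=> //; field; rewrite q1z q2z.
Qed.

Lemma ratfun_regularM (c d : C -> C) :
  ratfun_regular c -> ratfun_regular d -> ratfun_regular (fun z => c z * d z).
Proof.
move=> [E1 [p1 [q1 [q1z0 cpq]]]] [E2 [p2 [q2 [q2z0 dpq]]]].
exists (E1 ++ E2), (p1 * p2), (q1 * q2).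
split=> [|z]; first by rewrite hornerM mulf_neq0.
rewrite mem_cat negb_or => /andP[/cpq[q1z ->] /dpq[q2z ->]].
by rewrite !hornerM invfM mulrACA mulf_neq0.
Qed.

Lemma ratfun_regular_sum (I : finType) (c : I -> C -> C) :
  (forall i, ratfun_regular (c i)) -> ratfun_regular (fun z => \sum_i c i z).
Proof.
move=> creg; elim: (index_enum I) => [|i r IHr].
  by apply: eq_ratfun_regular (ratfun_regular_cst 0) => z; rewrite big_nil.
by apply: eq_ratfun_regular (ratfun_regularD (creg i) IHr) => z; rewrite big_cons.
Qed.

Lemma ratfun_regular_inv_pow (zb : C) (n : nat) :
  zb != z0 -> ratfun_regular (fun z => ((z - zb) ^+ n)^-1).
Proof.
move=> zbz0; exists [:: zb], 1, (('X - zb%:P) ^+ n).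
rewrite horner_exp hornerXsubC expf_neq0 ?subr_eq0 1?eq_sym //; split=> // z.
rewrite inE horner_exp hornerXsubC hornerC mul1r => zzb.
by rewrite expf_neq0 // subr_eq0.
Qed.

Lemma ratfun_regular_pow (k : nat) : ratfun_regular (fun z => (z - z0) ^+ k).
Proof.
apply: eq_ratfun_regular (ratfun_regular_poly (('X - z0%:P) ^+ k)) => z.
by rewrite horner_exp hornerXsubC.
Qed.

Lemma ratfun_regular_pow_div (k n : nat) :
  (n <= k)%N -> ratfun_regular (fun z => (z - z0) ^+ k / (z - z0) ^+ n).
Proof.
move=> nk; apply: (@ratfun_regular_ext [:: z0] _ _ _ (ratfun_regular_pow (k - n))).
by move=> z; rewrite inE -subr_eq0 => /negbTE zz0; rewrite expfB_cond ?zz0.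
Qed.

(* A polynomial in [z - z0] when [p] has degree at most [k]. *)
Lemma ratfun_regular_reversed (k : nat) (p : {poly C}) : (size p <= k.+1)%N ->
  ratfun_regular (fun z => (z - z0) ^+ k * p.[(z - z0)^-1]).
Proof.
move=> sp.
have reg_term (i : 'I_k.+1) :
    ratfun_regular (fun z => p`_i * ((z - z0) ^+ k / (z - z0) ^+ i)).
  by apply: ratfun_regularM (ratfun_regular_cst _) (ratfun_regular_pow_div _); rewrite -ltnS.
apply: eq_ratfun_regular (ratfun_regular_sum reg_term) => z.
by rewrite (horner_coef_wide _ sp) mulr_sumr; apply: eq_bigr => i _; rewrite exprVn mulrCA.
Qed.

Variable A : lmodType C.

(* [pole_order_le H z0 k] unfolds to [regular_at z0 (fun z => (z - z0) ^+ k *: H z)]. *)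
Definition regular_at (f : C -> A) : Prop :=
  exists (E : seq C) (n : nat) (P Q : 'I_n -> {poly C}) (v : 'I_n -> A),
    (forall j, (Q j).[z0] != 0) /\
    forall z, z \notin E -> f z = \sum_(j < n) ((P j).[z] / (Q j).[z]) *: v j.

Lemma eq_regular_at (f g : C -> A) : f =1 g -> regular_at g -> regular_at f.
Proof.
by move=> fg [E [n [P [Q [v [Qz0 gPQ]]]]]]; exists E, n, P, Q, v; split=> // z /gPQ<-.
Qed.

Lemma regular_at0 : regular_at (fun=> 0).
Proof.
exists [::], 0%N, (fun=> 0), (fun=> 1), (fun=> 0).
by split=> [[]|z _]; rewrite ?big_ord0.
Qed.

Lemma regular_atD (f g : C -> A) :
  regular_at f -> regular_at g -> regular_at (fun z => f z + g z).
Proof.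
move=> [E1 [n1 [P1 [Q1 [v1 [Q1z0 fPQ]]]]]] [E2 [n2 [P2 [Q2 [v2 [Q2z0 gPQ]]]]]].
pose glue T (x1 : 'I_n1 -> T) (x2 : 'I_n2 -> T) (i : 'I_(n1 + n2)) :=
  match split i with inl j => x1 j | inr j => x2 j end.
exists (E1 ++ E2), (n1 + n2)%N, (glue _ P1 P2), (glue _ Q1 Q2), (glue _ v1 v2).
split=> [i|z]; first by rewrite /glue; case: (split i).
rewrite mem_cat negb_or => /andP[/fPQ-> /gPQ->].
by rewrite big_split_ord /glue; congr (_ + _); apply: eq_bigr => i _;
  [rewrite (unsplitK (inl _ i)) | rewrite (unsplitK (inr _ i))].
Qed.

Lemma regular_atZ (c : C -> C) (f : C -> A) :
  ratfun_regular c -> regular_at f -> regular_at (fun z => c z *: f z).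
Proof.
move=> [E1 [p [q [qz0 cpq]]]] [E2 [n [P [Q [v [Qz0 fPQ]]]]]].
exists (E1 ++ E2), n, (fun j => p * P j), (fun j => q * Q j), v.
split=> [j|z]; first by rewrite hornerM mulf_neq0.
rewrite mem_cat negb_or => /andP[/cpq[_ ->] /fPQ->].
rewrite scaler_sumr; apply: eq_bigr => j _.
by rewrite scalerA !hornerM invfM mulrACA.
Qed.

Lemma regular_at_scale_vec (c : C -> C) (v : A) :
  ratfun_regular c -> regular_at (fun z => c z *: v).
Proof.
move=> creg; apply: regular_atZ creg _.
exists [::], 1%N, (fun=> 1), (fun=> 1), (fun=> v).
by split=> [j|z _]; rewrite ?big_ord1 hornerC ?oner_eq0 ?divr1 ?scale1r.
Qed.

Lemma regular_atB (f g : C -> A) :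
  regular_at f -> regular_at g -> regular_at (fun z => f z - g z).
Proof.
move=> freg greg; apply: eq_regular_at (regular_atD freg
  (regular_atZ (ratfun_regular_cst (-1)) greg)) => z.
by rewrite scaleN1r.
Qed.

Lemma regular_at_sum (I : finType) (f : I -> C -> A) :
  (forall i, regular_at (f i)) -> regular_at (fun z => \sum_i f i z).
Proof.
move=> freg; elim: (index_enum I) => [|i r IHr].
  by apply: eq_regular_at regular_at0 => z; rewrite big_nil.
by apply: eq_regular_at (regular_atD (freg i) IHr) => z; rewrite big_cons.
Qed.

End RegularAt.

Section SymmetricBilinear.
Variables (C : numClosedFieldType) (F A : lmodType C) (B : F -> F -> A).
Hypothesis B_linear : forall (c : C) X Y Z, B (c *: X + Y) Z = c *: B X Z + B Y Z.
Hypothesis B_sym : forall X Y, B X Y = B Y X.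

Lemma B0l Z : B 0 Z = 0.
Proof.
have := B_linear 1 0 0 Z; rewrite scale1r addr0 scale1r => B00.
by apply: (addrI (B 0 Z)); rewrite addr0 -B00.
Qed.

Lemma BDl X Y Z : B (X + Y) Z = B X Z + B Y Z.
Proof. by rewrite -[X in B (X + _)]scale1r B_linear scale1r. Qed.

Lemma BZl c X Z : B (c *: X) Z = c *: B X Z.
Proof. by rewrite -[c *: X]addr0 B_linear B0l addr0. Qed.

Lemma B_suml (I : Type) (r : seq I) (P : pred I) (X : I -> F) Z :
  B (\sum_(i <- r | P i) X i) Z = \sum_(i <- r | P i) B (X i) Z.
Proof. exact: (big_morph (B^~ Z) (fun X Y => BDl X Y Z) (B0l Z)). Qed.

Lemma B_sumr (I : Type) (r : seq I) (P : pred I) (X : I -> F) Z :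
  B Z (\sum_(i <- r | P i) X i) = \sum_(i <- r | P i) B Z (X i).
Proof. by rewrite B_sym B_suml; apply: eq_bigr => i _; rewrite B_sym. Qed.

Lemma B_sum_scale (I1 I2 : Type) (r1 : seq I1) (r2 : seq I2)
    (c1 : I1 -> C) (c2 : I2 -> C) (X1 : I1 -> F) (X2 : I2 -> F) :
  B (\sum_(i <- r1) c1 i *: X1 i) (\sum_(j <- r2) c2 j *: X2 j) =
  \sum_(i <- r1) \sum_(j <- r2) (c1 i * c2 j) *: B (X1 i) (X2 j).
Proof.
rewrite B_suml; apply: eq_bigr => i _; rewrite BZl B_sumr scaler_sumr.
by apply: eq_bigr => j _; rewrite B_sym BZl B_sym scalerA.
Qed.

End SymmetricBilinear.

Section SugawaraPolynomials.
Variables (C : numClosedFieldType) (k : nat) (lev eta : nat -> C).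

Definition twist_poly : {poly C} := \poly_(s < k) lev s.

Definition eta_poly (T : nat) : {poly C} :=
  \poly_(p < k) (if (p <= T)%N then eta (T - p) else 0).

Hypothesis eta_lev : forall (q r : nat), (q < k)%N -> (r < k)%N ->
  \sum_(p < k - r) eta (p + q)%N * lev (p + r)%N = (q == r)%:R.

Lemma lev_eta_dual (q r : nat) : (q < k)%N ->
  \sum_(s < k | (r <= s)%N) lev s * eta (s - r + q) = (q == r)%:R.
Proof.
move=> qk; have [kr | rk] := leqP k r.
  rewrite big_pred0 => [|s]; last by apply/negbTE; rewrite -ltnNge (leq_trans _ kr).
  by rewrite (_ : q == r = false) //; apply/eqP; lia.
have -> : \sum_(s < k | (r <= s)%N) lev s * eta (s - r + q)
          = \sum_(r <= s < k) lev s * eta (s - r + q) by rewrite big_geq_mkord.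
rewrite -(eta_lev qk rk) -{1}[r]add0n big_addn big_mkord.
by apply: eq_bigr => p _; rewrite mulrC addnK.
Qed.

(* The coefficient is the sum of [lev_eta_dual] with [r := maxn (n.+1 - k) (n - T)]
   and [q := r + T - n]. *)
Lemma coef_twist_eta_poly (T n : nat) : (T.+2 <= k + k)%N -> (k <= n.+1)%N ->
  (twist_poly * eta_poly T)`_n = (n == T)%:R.
Proof.
move=> Tk kn; set r := maxn (n.+1 - k) (n - T); set q := (r + T - n)%N.
have -> : (n == T) = (q == r) by apply/eqP/eqP; lia.
rewrite -lev_eta_dual; last by lia.
rewrite coefM (big_ord_widen_cond _ (fun s => r <= s)%N
  (fun s => lev s * eta (s - r + q)) kn) [RHS]big_mkcond.
apply: eq_bigr => s _; rewrite !coef_poly andbC; case: ltnP => sk; last by rewrite mul0r.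
have [rs | sr] := leqP r s.
  have [nsk nsT] : (n - s < k)%N /\ (n - s <= T)%N by lia.
  by rewrite nsk nsT; congr (_ * eta _); lia.
case: ifP => [nsk|_]; last by rewrite mulr0.
by case: ifP => [nsT|_]; [exfalso; lia | rewrite mulr0].
Qed.

Lemma size_sugawara_defect (T : nat) : (T.+2 <= k + k)%N ->
  (size ('X^T - twist_poly * eta_poly T)%R <= k.-1)%N.
Proof.
move=> Tk; apply/leq_sizeP => n kn.
by rewrite coefB coefXn coef_twist_eta_poly ?subrr //; lia.
Qed.

End SugawaraPolynomials.

Section Site.
Variables (C : numClosedFieldType) (F A : lmodType C) (B : F -> F -> A).
Variables (k : nat) (lev eta : nat -> C) (Jl : nat -> F) (z0 : C).

Definition site_lax (z : C) : F := \sum_(p < k) ((z - z0) ^+ p.+1)^-1 *: Jl p.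

Definition site_twist (z : C) : C := \sum_(s < k) lev s / (z - z0) ^+ s.+1.

Definition site_sugawara (p : nat) : A :=
  2^-1 *: \sum_(q < k) \sum_(r < k | (p <= q + r)%N) eta (q + r - p) *: B (Jl q) (Jl r).

Definition site_P (z : C) : A :=
  \sum_(p < k) ((z - z0) ^+ p.+1)^-1 *: site_sugawara p.

Lemma site_twistE z :
  site_twist z = (z - z0)^-1 * (twist_poly k lev).[(z - z0)^-1].
Proof.
rewrite horner_poly mulr_sumr; apply: eq_bigr => s _.
by rewrite -exprVn exprS mulrCA.
Qed.

Hypothesis B_linear : forall (c : C) X Y Z, B (c *: X + Y) Z = c *: B X Z + B Y Z.
Hypothesis B_sym : forall X Y, B X Y = B Y X.

Lemma B_site_lax z : B (site_lax z) (site_lax z) =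
  \sum_(q < k) \sum_(r < k) ((z - z0)^-1 ^+ 2 * (z - z0)^-1 ^+ (q + r)) *: B (Jl q) (Jl r).
Proof.
rewrite B_sum_scale //; apply: eq_bigr => q _; apply: eq_bigr => r _.
by rewrite -!exprVn -!exprD addSn addnS add2n.
Qed.

Lemma site_PE z : site_P z = 2^-1 *: \sum_(q < k) \sum_(r < k)
  ((z - z0)^-1 * (eta_poly k eta (q + r)).[(z - z0)^-1]) *: B (Jl q) (Jl r).
Proof.
rewrite /site_P /site_sugawara.
under eq_bigr do rewrite scalerA mulrC -scalerA.
rewrite -scaler_sumr; congr (_ *: _).
rewrite (eq_bigr (fun p : 'I_k => \sum_(q < k) \sum_(r < k) (if (p <= q + r)%N
    then (z - z0)^-1 ^+ p.+1 * eta (q + r - p) else 0) *: B (Jl q) (Jl r))); last first.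
  move=> p _; rewrite scaler_sumr; apply: eq_bigr => q _.
  rewrite big_mkcond scaler_sumr; apply: eq_bigr => r _.
  by case: ifP; rewrite ?scaler0 ?scale0r // scalerA exprVn.
rewrite exchange_big; apply: eq_bigr => q _; rewrite exchange_big; apply: eq_bigr => r _.
rewrite horner_poly mulr_sumr scaler_suml; apply: eq_bigr => p _.
by case: ifP => _; rewrite ?mul0r ?mulr0 ?scale0r // exprS; congr (_ *: _); ring.
Qed.

Lemma site_pair_diagE z :
  (z - z0) ^+ k *: (2^-1 *: B (site_lax z) (site_lax z) - site_twist z *: site_P z) =
  2^-1 *: \sum_(q < k) \sum_(r < k) ((z - z0) ^+ k *
    ('X^2 * ('X^(q + r) - twist_poly k lev * eta_poly k eta (q + r))).[(z - z0)^-1])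
    *: B (Jl q) (Jl r).
Proof.
rewrite B_site_lax site_PE site_twistE; set u := (z - z0)^-1.
rewrite scalerA (mulrC _ 2^-1) -scalerA -scalerBr scalerA (mulrC _ 2^-1) -scalerA.
congr (_ *: _); rewrite scaler_sumr -sumrB scaler_sumr; apply: eq_bigr => q _.
rewrite scaler_sumr -sumrB scaler_sumr; apply: eq_bigr => r _.
rewrite scalerA -scalerBl scalerA; congr (_ *: _).
by rewrite hornerM hornerXn hornerD hornerN hornerXn hornerM; ring.
Qed.

Hypothesis eta_lev : forall (q r : nat), (q < k)%N -> (r < k)%N ->
  \sum_(p < k - r) eta (p + q)%N * lev (p + r)%N = (q == r)%:R.

Lemma site_pair_diag_regular : regular_at z0 (fun z =>
  (z - z0) ^+ k *: (2^-1 *: B (site_lax z) (site_lax z) - site_twist z *: site_P z)).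
Proof.
apply: eq_regular_at site_pair_diagE _.
apply: regular_atZ; first exact: ratfun_regular_cst.
apply: regular_at_sum => q; apply: regular_at_sum => r.
apply: regular_at_scale_vec; apply: ratfun_regular_reversed.
have qrk : ((q + r).+2 <= k + k)%N by have := ltn_ord q; have := ltn_ord r; lia.
apply: leq_trans (size_polyMleq _ _) _; rewrite size_polyXn.
have := size_sugawara_defect eta_lev qrk; have := ltn_ord q.
by rewrite add3n /=; set s := size _; lia.
Qed.

End Site.

Section GaudinModel.
Variables (C : numClosedFieldType) (S : finType) (F A : lmodType C).
Variables (m : S -> nat) (lev : S -> nat -> C) (zp : S -> C) (linf : C).
Variables (J : S -> nat -> F) (B : F -> F -> A) (eta : S -> nat -> C).
Hypothesis B_linear : forall (c : C) X Y Z, B (c *: X + Y) Z = c *: B X Z + B Y Z.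
Hypothesis B_sym : forall X Y, B X Y = B Y X.

Let lax b := site_lax (m b) (J b) (zp b).
Let tw b := site_twist (m b) (lev b) (zp b).
Let sP b := site_P B (m b) (eta b) (J b) (zp b).

Lemma calH_site_pairs z : calH m lev zp linf J B eta z =
  \sum_(b : S) \sum_(d : S) (2^-1 *: B (lax b z) (lax d z) - tw b z *: sP d z)
  + linf *: calP m zp J B eta z.
Proof.
rewrite /calH /twist scalerBl opprD opprK addrA; congr (_ + _).
rewrite /gaudinLax (B_suml B_linear) scaler_sumr scaler_suml -sumrB.
by apply: eq_bigr => b _; rewrite (B_sumr B_linear B_sym) scaler_sumr scaler_sumr -sumrB.
Qed.

Variable a : S.
Hypothesis zp_inj : injective zp.

Lemma inv_pow_site_regular b (n : nat) :
  b != a -> ratfun_regular (zp a) (fun z => ((z - zp b) ^+ n)^-1).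
Proof. by move=> ba; apply: ratfun_regular_inv_pow; apply: contra_neq ba => /zp_inj. Qed.

Lemma site_factor_regular b (p : 'I_(m b)) :
  ratfun_regular (zp a) (fun z => (z - zp a) ^+ m a / (z - zp b) ^+ p.+1).
Proof.
move: p; have [-> p | ba p] := eqVneq b a; first exact: ratfun_regular_pow_div.
by apply: ratfun_regularM; [exact: ratfun_regular_pow | exact: inv_pow_site_regular].
Qed.

Lemma pair_factor_regular b d (p : 'I_(m b)) (q : 'I_(m d)) : (b != a) || (d != a) ->
  ratfun_regular (zp a) (fun z =>
    (z - zp a) ^+ m a / (z - zp b) ^+ p.+1 / (z - zp d) ^+ q.+1).
Proof.
case/orP => [ba | da].
  apply: eq_ratfun_regular (ratfun_regularM (site_factor_regular q)
    (inv_pow_site_regular p.+1 ba)) => z.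
  by rewrite mulrAC.
exact: ratfun_regularM (site_factor_regular p) (inv_pow_site_regular q.+1 da).
Qed.

Lemma site_pair_offdiag_regular b d : (b != a) || (d != a) ->
  regular_at (zp a) (fun z =>
    (z - zp a) ^+ m a *: (2^-1 *: B (lax b z) (lax d z) - tw b z *: sP d z)).
Proof.
move=> bda.
have term_reg c (X : A) (p : 'I_(m b)) (q : 'I_(m d)) := regular_at_scale_vec X
  (ratfun_regularM (ratfun_regular_cst _ c) (pair_factor_regular p q bda)).
apply: eq_regular_at (regular_atB
  (regular_at_sum (fun p : 'I_(m b) => regular_at_sum (fun q : 'I_(m d) =>
     term_reg 2^-1 (B (J b p) (J d q)) p q)))
  (regular_at_sum (fun s : 'I_(m b) => regular_at_sum (fun p : 'I_(m d) =>
     term_reg (lev b s) (site_sugawara B (m d) (eta d) (J d) p) s p)))) => z.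
rewrite scalerBr; congr (_ - _).
  rewrite B_sum_scale // scalerA scaler_sumr; apply: eq_bigr => p _.
  rewrite scaler_sumr; apply: eq_bigr => q _; rewrite scalerA; congr (_ *: _); ring.
rewrite /tw /site_twist scaler_suml scaler_sumr; apply: eq_bigr => s _.
rewrite !scaler_sumr; apply: eq_bigr => p _; rewrite !scalerA; congr (_ *: _); ring.
Qed.

Lemma calP_scaled_regular :
  regular_at (zp a) (fun z => (z - zp a) ^+ m a *: (linf *: calP m zp J B eta z)).
Proof.
apply: eq_regular_at (regular_at_sum (fun d => regular_at_sum (fun p : 'I_(m d) =>
  regular_at_scale_vec (segalSugawara m J B eta d p)
    (ratfun_regularM (ratfun_regular_cst _ linf) (site_factor_regular p))))) => z.
rewrite scalerA /calP scaler_sumr; apply: eq_bigr => d _.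
by rewrite scaler_sumr; apply: eq_bigr => p _; rewrite scalerA; congr (_ *: _); ring.
Qed.

Hypothesis eta_lev : forall b (q r : nat), (q < m b)%N -> (r < m b)%N ->
  \sum_(p < m b - r) eta b (p + q)%N * lev b (p + r)%N = (q == r)%:R.

Lemma site_pair_regular b d : regular_at (zp a) (fun z =>
  (z - zp a) ^+ m a *: (2^-1 *: B (lax b z) (lax d z) - tw b z *: sP d z)).
Proof.
have [/andP[/eqP-> /eqP->] | bda] := boolP ((b == a) && (d == a)).
  exact: site_pair_diag_regular (J a) (zp a) B_linear B_sym (@eta_lev a).
by apply: site_pair_offdiag_regular; rewrite -negb_and.
Qed.

End GaudinModel.

Theorem propositionA1
  (C : numClosedFieldType) (S : finType) (F A : lmodType C)
  (bar : S -> S) (m : S -> nat) (lev : S -> nat -> C) (zp : S -> C) (linf : C)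
  (J : S -> nat -> F) (B : F -> F -> A) (eta : S -> nat -> C)
  (* data of the local affine Gaudin model *)
  (Hbar : forall a, bar (bar a) = a)
  (Hm_pos : forall a, (0 < m a)%N)
  (Hm_bar : forall a, m (bar a) = m a)
  (Hlev_bar : forall a p, lev (bar a) p = (lev a p)^*)
  (Hlev_top : forall a, lev a (m a).-1 != 0)
  (Hzp_bar : forall a, zp (bar a) = (zp a)^*)
  (Hzp_inj : injective zp)
  (Hlinf_real : linf^* = linf)
  (Hlinf : linf != 0)
  (* B X Y = \int_D dx kappa(X(x), Y(x)) : symmetric bilinear *)
  (HB_lin : forall (c : C) X Y Z, B (c *: X + Y) Z = c *: B X Z + B Y Z)
  (HB_sym : forall X Y, B X Y = B Y X)
  (* eta^a is the solution of the triangular system *)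
  (Heta : forall a (q r : nat), (q < m a)%N -> (r < m a)%N ->
     \sum_(p < m a - r) eta a (p + q)%N * lev a (p + r)%N = (q == r)%:R) :
  forall a : S, pole_order_le (calH m lev zp linf J B eta) (zp a) (m a).
Proof.
move=> a.
apply: eq_regular_at (regular_atD
  (regular_at_sum (fun b => regular_at_sum
     (site_pair_regular J HB_lin HB_sym a Hzp_inj Heta b)))
  (calP_scaled_regular m linf J B eta a Hzp_inj)) => z.
rewrite calH_site_pairs // scalerDr scaler_sumr.
by under eq_bigr do rewrite scaler_sumr.
Qed.
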